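(* Let $(\mathcal{G},\mu)$ be an edge partition, $B\subseteq\mathcal{N}$ and $\zeta\in\Theta_\mathcal{G}(B)$. Let \[\mathcal{E}_\zeta=\{E\subseteq\zeta\cap\operatorname{im}\mu : (\zeta\setminus E)\cup\mu^*(E)\in\Theta_\mathcal{G}(B)\}.\] Then $\mathcal{E}_\zeta$ is closed under union: if $E_1,E_2\in\mathcal{E}_\zeta$ then $E_1\cup E_2\in\mathcal{E}_\zeta$.
   Context: $R$ is a partially ordered ring; $\mathcal{G}=(\mathcal{N},\mathcal{E})$ is a multidigraph with source/target maps $s,t\colon\mathcal{E}\to\mathcal{N}$, no self-loops, $\mathcal{N}=\{1,\dots,m+1\}$, labeling $\pi\colon\mathcal{E}\to R$. Trees/forests are subgraphs whose underlying undirected graph is acyclic (connected for trees); a tree is rooted at $N$ if $N$ is its only node without outgoing edges; spanning forests have node set $\mathcal{N}$ and are identified with their edge sets. $\Theta_\mathcal{G}(B)$ is the set of spanning forests with $|B|$ connected components, each a tree rooted at a node of $B$. A cycle is a closed directed path with no repeated nodes. $\mathcal{E}^-=\{e:\pi(e)\in R_{<0}\}$, $\mathcal{E}^+=\{e:\pi(e)\in R_{>0}\}$. A pair $(\mathcal{G},\mu)$ with $\mu\colon\mathcal{E}^-\to\mathcal{P}(\mathcal{E}^+)$ is an edge partition if (i) $\mathcal{E}=\mathcal{E}^+\sqcup\mathcal{E}^-$; (ii) every cycle contains at most one edge of $\mathcal{E}^-$; (iii) for each $e\in\mathcal{E}^-$: (a) $e'\in\mu(e)\Rightarrow s(e')=s(e)$;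 (b) $e'\in\mu(e)\Rightarrow$ every cycle containing $e'$ contains $t(e)$; (c) $\mu(e)\cap\mu(e')=\emptyset$ for $e\neq e'$. $\operatorname{im}\mu=\bigcup_{e\in\mathcal{E}^-}\mu(e)$ and $\mu^*\colon\operatorname{im}\mu\to\mathcal{E}^-$ is given by $\mu^*(e')=e$ if $e'\in\mu(e)$. *)

From HB Require Import structures.
From mathcomp Require Import all_boot all_order all_algebra.
Set Implicit Arguments. Unset Strict Implicit. Unset Printing Implicit Defensive.
Import Order.TTheory GRing.Theory Num.Theory.
Local Open Scope ring_scope.

(* Multidigraph: nodes 'I_m.+1 (= {1,...,m+1}), finite edge type E,
   source/target maps s t.  Subgraphs/spanning forests are edge sets. *)
Section Graph.
Variables (m : nat) (E : finType) (s t : E -> 'I_m.+1).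

Definition joins (e : E) (x y : 'I_m.+1) : bool :=
  ((s e == x) && (t e == y)) || ((s e == y) && (t e == x)).

(* undirected cycle in the subgraph with edge set F: distinct edges es and
   distinct vertices vs, with the i-th edge joining vs_i and vs_(i+1 mod k) *)
Definition ucycle_in (F : {set E}) (es : seq E) (vs : seq 'I_m.+1) : bool :=
  [&& 0 < size es, size vs == size es, uniq es, uniq vs, all (mem F) es &
      all (fun p => joins p.1 p.2.1 p.2.2) (zip es (zip vs (rot 1 vs)))]%N.

Definition acyclic (F : {set E}) : Prop :=
  forall es vs, ~~ ucycle_in F es vs.

Definition uadj (F : {set E}) : rel 'I_m.+1 :=
  fun x y => [exists e in F, joins e x y].

Definition comp (F : {set E}) (x : 'I_m.+1) : {set 'I_m.+1} :=
  [set y | connect (uadj F) x y].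

Definition components (F : {set E}) : {set {set 'I_m.+1}} :=
  [set comp F x | x : 'I_m.+1].

(* Theta_G(B): spanning forests with |B| components, each a tree rooted at a
   node of B (the root is the only node of the tree without outgoing edges) *)
Definition in_Theta (B : {set 'I_m.+1}) (F : {set E}) : Prop :=
  [/\ acyclic F,
      #|components F| = #|B| &
      forall C, C \in components F ->
        exists2 b, b \in B & [set v in C | [forall e in F, s e != v]] = [set b]].

Definition dcycle (p : seq E) : bool :=
  [&& 0 < size p, uniq (map s p) &
      all (fun q => t q.1 == s q.2) (zip p (rot 1 p))]%N.

Variables (R : porderZmodType) (pi : E -> R) (mu : E -> {set E}).

(* (G, mu) is an edge partition; mu is only relevant on E^- *)
Definition edge_partition : Prop :=
  [/\ (forall e, (0 < pi e) || (pi e < 0)),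
      (forall p, dcycle p -> (count (fun e => (pi e < 0)%R) p <= 1)%N) &
      forall e, pi e < 0 ->
        [/\ (forall e', e' \in mu e -> 0 < pi e'),
            (forall e', e' \in mu e -> s e' = s e),
            (forall e', e' \in mu e -> forall p, dcycle p -> e' \in p ->
                 t e \in map s p) &
            (forall e2, pi e2 < 0 -> e != e2 -> [disjoint mu e & mu e2])]].

Definition im_mu : {set E} := \bigcup_(e | pi e < 0) mu e.

Definition mustar (S : {set E}) : {set E} :=
  [set e | (pi e < 0) && [exists e' in S, e' \in mu e]].

Definition in_Ezeta (B : {set 'I_m.+1}) (zeta S : {set E}) : Prop :=
  S \subset zeta :&: im_mu /\ in_Theta B ((zeta :\: S) :|: mustar S).

End Graph.

From Pilot Require Import Defs.
From HB Require Import structures.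
From mathcomp Require Import all_boot all_order all_algebra zify.
(* Give [Defs.comp] priority over [ssrfun.comp]. *)
Import Defs.
Set Implicit Arguments. Unset Strict Implicit. Unset Printing Implicit Defensive.

(* Call a set of edges functional if every node has at most one outgoing edge
   in it, and say that it reaches sinks if following outgoing edges from any
   node ends at a node without outgoing edge.  A functional edge set that
   reaches sinks is acyclic and has one component per sink, containing that
   sink as its only sink; conversely the forests of Theta_G(B) are functional
   (two outgoing edges at a node would close an undirected cycle through the
   unique sink of its component) and reach sinks (an orbit of the successor
   map avoiding sinks is a directed cycle).
   Let S = E1 u E2 and zeta' = (zeta \ S) u mu*(S).  By (iii)(a) an edge of
   mu*(S) has the same source as the edges of S it replaces, and by (iii)(c)
   distinct edges of mu*(S) replace distinct edges of zeta, so zeta' is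
   functional with the same sinks as zeta.  By (ii) a directed cycle of zeta'
   has at most one edge in E^-, and all its other edges lie in zeta \ S, so the
   whole cycle lies in (zeta \ Ei) u mu*(Ei) for i = 1 or 2, which are
   acyclic.  Hence zeta' reaches sinks and belongs to Theta_G(B). *)

Lemma path_all_zip (T : Type) (r : rel T) x q :
  path r x q = all (fun ab => r ab.1 ab.2) (zip (x :: q) q).
Proof. by elim: q x => //= y q IH x; rewrite IH. Qed.

Lemma zip_cons_rcons (T : Type) (x z : T) q :
  zip (x :: q) (rcons q z) = rcons (zip (x :: q) q) (last x q, z).
Proof. by elim: q x => //= y q IH x; rewrite IH. Qed.

Lemma cycle_all_zip (T : Type) (r : rel T) p :
  cycle r p = all (fun ab => r ab.1 ab.2) (zip p (rot 1 p)).
Proof.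
case: p => // x q.
by rewrite rot1_cons /= rcons_path path_all_zip zip_cons_rcons all_rcons andbC.
Qed.

Lemma mem_zip (S T : eqType) (a : seq S) (b : seq T) u v :
  (u, v) \in zip a b -> u \in a /\ v \in b.
Proof.
elim: a b => [|x a IH] [|y b] //=; rewrite in_cons => /orP[/eqP[-> ->]|/IH[ua vb]].
  by split; apply: mem_head.
by rewrite !in_cons ua vb !orbT.
Qed.

Lemma zip_mem_l (S T : eqType) (a : seq S) (b : seq T) u :
  size a = size b -> u \in a -> exists v, (u, v) \in zip a b.
Proof.
elim: a b => [|x a IH] [|y b] //= [sz]; rewrite in_cons => /orP[/eqP->|/(IH _ sz)[v uv]].
  by exists y; rewrite mem_head.
by exists v; rewrite in_cons uv orbT.
Qed.

Lemma zip_zip_map (S T : eqType) (f : S -> T) (p q : seq S) :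
  zip p (zip (map f p) (map f q)) = map (fun ab => (ab.1, (f ab.1, f ab.2))) (zip p q).
Proof. by elim: p q => [|x p IH] [|y q] //=; rewrite IH. Qed.

Lemma count_le1_eq (S : eqType) (a : pred S) p x y : uniq p -> (count a p <= 1)%N ->
  x \in p -> y \in p -> a x -> a y -> x = y.
Proof.
move=> up cnt xp yp ax ay; apply/eqP; apply: contraTT cnt => xy.
rewrite -ltnNge (permP (perm_to_rem xp)) /= ax ltnS -has_count.
by apply/hasP; exists y; rewrite // mem_rem_uniq // inE eq_sym xy.
Qed.

Lemma iter_card_periodic (T : finType) (f : T -> T) n x : #|T| <= n ->
  exists k, iter k.+1 f (iter n f x) = iter n f x.
Proof.
move=> Tn; have [i io fo] : exists2 i, i < order f x & iter (order f x) f x = iter i f x.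
  exact/trajectP/looping_order.
have on : order f x <= n by rewrite (leq_trans _ Tn) ?max_card.
exists (order f x - i).-1; rewrite prednK ?subn_gt0 // -iterD.
have -> : (order f x - i + n = n - i + order f x)%N by lia.
by rewrite iterD fo -iterD subnK //; lia.
Qed.

Section Forests.
Variables (m : nat) (E : finType) (s t : E -> 'I_m.+1).
Implicit Types (F : {set E}) (x y : 'I_m.+1).

Definition is_sink F x := [forall e in F, s e != x].
Definition out_edge F x := [pick e in F | s e == x].
Definition succ F x := if out_edge F x is Some e then t e else x.
(* [m.+1] is the number of nodes: enough steps to reach a sink if any is reachable. *)
Definition sink_of F x := iter m.+1 (succ F) x.
Definition reaches_sinks F := forall x, is_sink F (sink_of F x).
Definition out_functional F := {in F &, forall e1 e2, s e1 = s e2 -> e1 = e2}.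

Lemma succ_sink F x : is_sink F x -> succ F x = x.
Proof.
rewrite /succ /out_edge; case: pickP => // e /andP[eF /eqP <-] /forall_inP/(_ e eF).
by rewrite eqxx.
Qed.

Lemma out_edgeP F x : ~~ is_sink F x ->
  exists e, [/\ out_edge F x = Some e, e \in F, s e = x & succ F x = t e].
Proof.
rewrite /succ /out_edge; case: pickP => [e /andP[eF /eqP se]|none] nsink.
  by exists e.
case/negP: nsink; apply/forall_inP => e eF; apply: contraFN (none e) => /eqP se.
by rewrite eF se eqxx.
Qed.

Lemma nonsink_src F e : e \in F -> ~~ is_sink F (s e).
Proof. by move=> eF; apply/negP => /forall_inP/(_ e eF); rewrite eqxx. Qed.

Lemma succ_src F e : out_functional F -> e \in F -> succ F (s e) = t e.
Proof.
move=> fF eF; have [e' [_ e'F se' ->]] := out_edgeP (nonsink_src eF).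
by rewrite (fF _ _ e'F eF se').
Qed.

Lemma sink_of_sink F x : is_sink F x -> sink_of F x = x.
Proof. by move=> sx; rewrite /sink_of iter_fix // succ_sink. Qed.

Lemma sink_of_succ F x : reaches_sinks F -> sink_of F (succ F x) = sink_of F x.
Proof. by move=> rF; rewrite /sink_of -iterSr iterS (succ_sink (rF x)). Qed.

Lemma uadj_sym F : symmetric (uadj s t F).
Proof.
by move=> x y; apply/existsP/existsP => -[e /andP[eF j]]; exists e;
  rewrite eF /joins orbC.
Qed.

Lemma connect_uadj_sym F : connect_sym (uadj s t F).
Proof. exact/sym_connect_sym/uadj_sym. Qed.

Lemma connect_iter_succ F x k : connect (uadj s t F) x (iter k (succ F) x).
Proof.
elim: k => //= k IH; apply: connect_trans IH _; set y := iter k _ x.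
case: (boolP (is_sink F y)) => [/succ_sink -> //|/out_edgeP[e [_ eF se ->]]].
by apply: connect1; apply/existsP; exists e; rewrite eF /joins se !eqxx.
Qed.

Lemma connect_sink_of F x : connect (uadj s t F) x (sink_of F x).
Proof. exact: connect_iter_succ. Qed.

Lemma connect_uadj_sub F1 F2 x y : F1 \subset F2 ->
  connect (uadj s t F1) x y -> connect (uadj s t F2) x y.
Proof.
move=> sF; apply: connect_sub => a b /existsP[e /andP[eF j]].
by apply: connect1; apply/existsP; exists e; rewrite (subsetP sF _ eF).
Qed.

Lemma acyclic_sub F1 F2 : F1 \subset F2 -> acyclic s t F2 -> acyclic s t F1.
Proof.
move=> sF ac es vs; apply: contraNN (ac es vs); rewrite /ucycle_in.
case/and5P=> -> -> -> -> /andP[esF ->]; rewrite /= andbT.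
by apply: sub_all esF => e /(subsetP sF).
Qed.

Lemma dcycle_ucycle F p : dcycle s t p -> all (mem F) p -> ucycle_in s t F p (map s p).
Proof.
case/and3P => p0 up cyc pF; rewrite /ucycle_in p0 size_map eqxx (map_uniq up) up pF.
rewrite -map_rot zip_zip_map all_map.
by apply: sub_all cyc => -[a b] /= /eqP tab; rewrite /joins /= tab !eqxx.
Qed.

Lemma acyclic_dcycle F p : acyclic s t F -> dcycle s t p -> ~~ all (mem F) p.
Proof. by move=> ac dp; apply: contraNN (ac p (map s p)); apply: dcycle_ucycle. Qed.

Lemma dcycle_cycle p :
  dcycle s t p = [&& 0 < size p, uniq (map s p) & cycle (fun a b => t a == s b) p].
Proof. by rewrite /dcycle cycle_all_zip. Qed.

Lemma fcycle_succ_dcycle F c x : x \in c -> uniq c -> fcycle (succ F) c ->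
  {in c, forall z, ~~ is_sink F z} -> exists p, dcycle s t p && all (mem F) p.
Proof.
move=> xc uc cyc nsink; have c0 : 0 < size c by case: (c) xc.
have [e0 _] := out_edgeP (nsink x xc).
pose oe z := odflt e0 (out_edge F z).
have oeP : {in c, forall z, [/\ oe z \in F, s (oe z) = z & t (oe z) = succ F z]}.
  by move=> z /nsink/out_edgeP[e [oz eF se ->]]; rewrite /oe oz.
have soe : map s (map oe c) = c.
  by rewrite -map_comp -[RHS]map_id; apply/eq_in_map => z /oeP[].
exists (map oe c); rewrite dcycle_cycle size_map soe c0 uc cycle_map all_map /=.
apply/andP; split; last by apply/allP => z /oeP[].
apply: (sub_in_cycle (P := mem c)) cyc; last exact/allP.
move=> a b ac bc /eqP ab; rewrite /relpre /=.
by have [_ _ ->] := oeP a ac; have [_ -> _] := oeP b bc; rewrite ab.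
Qed.

Lemma no_dcycle_reaches_sinks F :
  (forall p, dcycle s t p -> ~~ all (mem F) p) -> reaches_sinks F.
Proof.
move=> nodc x; apply/negPn/negP => ny; set y := sink_of F x in ny.
have [k yk] := iter_card_periodic (succ F) x (eq_leq (card_ord m.+1)).
have cyc : fcycle (succ F) (orbit (succ F) y) by apply/(orbitPcycle 3 0); exists k.
have nsink : {in orbit (succ F) y, forall z, ~~ is_sink F z}.
  move=> z zy; apply: contra ny => sz.
  have zy' : fconnect (succ F) z y by rewrite (fconnect_cycle cyc zy) in_orbit.
  by rewrite -(iter_findex zy') iter_fix ?succ_sink.
have [p /andP[dp pF]] := fcycle_succ_dcycle (in_orbit _ y) (orbit_uniq _ y) cyc nsink.
by have := nodc p dp; rewrite pF.
Qed.

Lemma acyclic_reaches_sinks F : acyclic s t F -> reaches_sinks F.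
Proof. by move=> ac; apply: no_dcycle_reaches_sinks => p; apply: acyclic_dcycle. Qed.

Lemma ucycle_succ_closed F es vs : out_functional F -> ucycle_in s t F es vs ->
  {in vs, forall v, succ F v \in vs /\ ~~ is_sink F v}.
Proof.
move=> fF /and5P[_ /eqP szvs ues _ /andP[esF esJ]].
have ends e : e \in es -> s e \in vs /\ t e \in vs.
  move=> ee; have [[a b] eab] : exists ab, (e, ab) \in zip es (zip vs (rot 1 vs)).
    by apply: zip_mem_l ee; rewrite size_zip size_rot minnn szvs.
  have [_ /mem_zip[av]] := mem_zip eab; rewrite mem_rot => bv.
  by have := allP esJ _ eab; rewrite /joins /= => /orP[]/andP[/eqP-> /eqP->].
have vs_src : {subset vs <= map s es}.
  have s_inj : {in es &, injective s}.
    by move=> a b /(allP esF) aF /(allP esF) bF; apply: fF.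
  have uses : uniq (map s es) by rewrite map_inj_in_uniq.
  have sub : {subset map s es <= vs} by move=> v /mapP[e ee ->]; case: (ends e ee).
  have [_ eq_vs] := uniq_min_size uses sub (eq_leq (etrans szvs (esym (size_map s es)))).
  by move=> v; rewrite eq_vs.
move=> v /vs_src/mapP[e ee ->]; have eF := allP esF e ee.
by rewrite succ_src //; split; [case: (ends e ee) | exact: nonsink_src].
Qed.

Lemma functional_reaches_sinks_acyclic F :
  out_functional F -> reaches_sinks F -> acyclic s t F.
Proof.
move=> fF rF es vs; apply/negP => cyc; have vs_closed := ucycle_succ_closed fF cyc.
have [v vv] : exists v, v \in vs.
  case/and3P: cyc => es0 /eqP szvs _; move: es0; rewrite -szvs.
  by case: (vs) => // v ? _; exists v; rewrite mem_head.
have itv k : iter k (succ F) v \in vs by elim: k => //= k /vs_closed[].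
by have [_ /negP] := vs_closed _ (itv m.+1); apply; apply: rF.
Qed.

Lemma sink_of_uadj F x y : out_functional F -> reaches_sinks F ->
  uadj s t F x y -> sink_of F x = sink_of F y.
Proof.
move=> fF rF /existsP[e /andP[eF /orP[]/andP[/eqP<- /eqP<-]]];
  by rewrite -(succ_src fF eF) sink_of_succ.
Qed.

Lemma sink_of_connect F x y : out_functional F -> reaches_sinks F ->
  connect (uadj s t F) x y -> sink_of F x = sink_of F y.
Proof.
move=> fF rF xy.
have cl : closed (uadj s t F) [pred z | sink_of F z == sink_of F x].
  by move=> a b ab; rewrite !inE (sink_of_uadj fF rF ab).
by have := closed_connect cl xy; rewrite !inE eqxx => /esym/eqP.
Qed.

Lemma card_components F : out_functional F -> reaches_sinks F ->
  #|components s t F| = #|[set x | is_sink F x]|.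
Proof.
move=> fF rF.
have -> : components s t F = [set comp s t F x | x in [set x | is_sink F x]].
  apply/setP => C; apply/imsetP/imsetP => -[x xF ->]; last by exists x.
  exists (sink_of F x); first by rewrite inE.
  apply/setP => z; rewrite !inE; apply: same_connect; first exact: connect_uadj_sym.
  exact: connect_sink_of.
rewrite card_in_imset // => a b; rewrite !inE => sa sb ab.
have : b \in comp s t F a by rewrite ab inE connect0.
by rewrite inE => /(sink_of_connect fF rF); rewrite !sink_of_sink.
Qed.

Lemma joins_mem e x y a b : joins s t e x y -> joins s t e a b -> x \in [:: a; b].
Proof.
rewrite /joins => /orP[]/andP[/eqP sx /eqP ty] /orP[]/andP[/eqP sa /eqP tb];
  by subst; rewrite !inE eqxx ?orbT.
Qed.

Lemma uniq_path_edges F x p : path (uadj s t F) x p -> uniq (x :: p) ->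
  exists es, [/\ uniq es, all (mem F) es, size es = size p &
    all (fun q => joins s t q.1 q.2.1 q.2.2) (zip es (zip (x :: p) p))].
Proof.
elim: p x => [|y p IH] x /=; first by exists [::].
case/andP=> /existsP[f /andP[fF fxy]] yp /andP[xyp uyp].
have [es [ues esF szes esJ]] := IH y yp uyp.
exists (f :: es); rewrite /= ues fF esF szes fxy esJ; split=> //.
rewrite andbT; move: xyp; apply: contraNN => fes.
have [[a b] fab] : exists ab, (f, ab) \in zip es (zip (y :: p) p).
  by apply: zip_mem_l fes; rewrite size2_zip /= ?szes ?leqnSn.
have [_ /mem_zip[ayp bp]] := mem_zip fab.
have := joins_mem fxy (allP esJ _ fab); rewrite !inE /= => /orP[]/eqP-> //.
by rewrite bp orbT.
Qed.

Lemma ucycle_of_bridge F e : e \in F ->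
  connect (uadj s t (F :\ e)) (t e) (s e) -> exists es vs, ucycle_in s t F es vs.
Proof.
move=> eF /connectP[p0 p0_path p0_last].
case: (shortenP p0_path) p0_last => p p_path up _ p_last.
have [es [ues esF szes esJ]] := uniq_path_edges p_path up.
exists (rcons es e), (t e :: p); apply/and5P; split.
- by rewrite size_rcons.
- by rewrite size_rcons szes.
- rewrite rcons_uniq ues andbT; apply: contraL esF => ees.
  by apply/allPn; exists e; rewrite // !inE eqxx.
- exact: up.
apply/andP; split.
  rewrite all_rcons [_ e]eF; apply: sub_all esF => f; rewrite /= !inE.
  by case/andP.
have szZ : size es = size (zip (t e :: p) p) by rewrite size2_zip /= ?szes ?leqnSn.
by rewrite rot1_cons zip_cons_rcons -p_last zip_rcons // all_rcons esJ /joins !eqxx.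
Qed.

Lemma Theta_sink_unique B F C u v : in_Theta s t B F -> C \in components s t F ->
  u \in C -> v \in C -> is_sink F u -> is_sink F v -> u = v.
Proof.
case=> _ _ rooted CF uC vC su sv; have [b _ Cb] := rooted C CF.
have : u \in [set z in C | [forall e in F, s e != z]] by rewrite inE uC.
have : v \in [set z in C | [forall e in F, s e != z]] by rewrite inE vC.
by rewrite Cb !inE => /eqP-> /eqP->.
Qed.

Lemma comp_in_components F x : comp s t F x \in components s t F.
Proof. by apply/imsetP; exists x. Qed.

Lemma Theta_sink_in B F x : in_Theta s t B F -> is_sink F x -> x \in B.
Proof.
case=> _ _ rooted sx; have [b bB Cb] := rooted _ (comp_in_components F x).
have : x \in [set z in comp s t F x | [forall e in F, s e != z]].
  by rewrite !inE connect0.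
by rewrite Cb inE => /eqP->.
Qed.

Lemma Theta_functional B F : in_Theta s t B F -> out_functional F.
Proof.
move=> thF e1 e2 e1F e2F s12; apply/eqP/negPn/negP => e12; have [ac _ _] := thF.
have F'F : F :\ e1 \subset F by apply: subsetDl.
have rF' := acyclic_reaches_sinks (acyclic_sub F'F ac).
have sinkF z : is_sink (F :\ e1) z -> is_sink F z.
  move=> /forall_inP sz; apply/forall_inP => e eF.
  have [->|ne1] := eqVneq e e1; last by apply: sz; rewrite !inE ne1.
  by rewrite s12; apply: sz; rewrite !inE eq_sym e12.
have e1_adj : connect (uadj s t F) (s e1) (t e1).
  by apply: connect1; apply/existsP; exists e1; rewrite e1F /joins !eqxx.
have same_sink : sink_of (F :\ e1) (t e1) = sink_of (F :\ e1) (s e1).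
  apply: (Theta_sink_unique thF (comp_in_components F (s e1))); rewrite ?inE.
  - exact: connect_trans e1_adj (connect_uadj_sub F'F (connect_sink_of _ _)).
  - exact: connect_uadj_sub F'F (connect_sink_of _ _).
  - exact/sinkF/rF'.
  - exact/sinkF/rF'.
have back : connect (uadj s t (F :\ e1)) (sink_of (F :\ e1) (t e1)) (s e1).
  by rewrite same_sink connect_uadj_sym; apply: connect_sink_of.
have [es [vs cyc]] := ucycle_of_bridge e1F (connect_trans (connect_sink_of _ _) back).
by have := ac es vs; rewrite cyc.
Qed.

Lemma Theta_of_sinks B zeta F : in_Theta s t B zeta ->
  out_functional F -> reaches_sinks F -> is_sink F =1 is_sink zeta -> in_Theta s t B F.
Proof.
move=> thz fF rF sinkE; split; first exact: functional_reaches_sinks_acyclic.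
  have [acz <- _] := thz.
  have [fz rz] := (Theta_functional thz, acyclic_reaches_sinks acz).
  rewrite (card_components fF rF) (card_components fz rz).
  by apply: eq_card => x; rewrite !inE sinkE.
move=> C /imsetP[x _ ->]; exists (sink_of F x).
  by apply: (Theta_sink_in thz); rewrite -sinkE; apply: rF.
apply/setP => v; rewrite !inE; apply/andP/eqP => [[xv sv]|->].
  by rewrite (sink_of_connect fF rF xv) sink_of_sink.
by split; [apply: connect_sink_of | apply: rF].
Qed.

End Forests.

Section EdgePartition.
Variables (m : nat) (E : finType) (s t : E -> 'I_m.+1).
Variables (R : porderZmodType) (pi : E -> R) (mu : E -> {set E}).
Implicit Types (S zeta : {set E}) (e g : E).
Local Open Scope ring_scope.

Lemma mustarP S g :
  reflect (pi g < 0 /\ exists2 e, e \in S & e \in mu g) (g \in mustar pi mu S).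
Proof.
rewrite inE; apply: (iffP andP) => -[ng ex]; split=> //.
  by have [e /andP[eS emu]] := existsP ex; exists e.
by case: ex => e eS emu; apply/existsP; exists e; rewrite eS.
Qed.

Lemma mustarU S1 S2 : mustar pi mu (S1 :|: S2) = mustar pi mu S1 :|: mustar pi mu S2.
Proof.
apply/setP => g; rewrite in_setU; apply/mustarP/orP => [[ng [e]]|].
  by rewrite in_setU => /orP[] eS emu; [left | right]; apply/mustarP; split=> //; exists e.
by case=> /mustarP[ng [e eS emu]]; split=> //; exists e; rewrite // in_setU eS ?orbT.
Qed.

Lemma im_muP e : reflect (exists2 g, pi g < 0 & e \in mu g) (e \in im_mu pi mu).
Proof. exact: (iffP bigcupP). Qed.

Definition exchange zeta S := (zeta :\: S) :|: mustar pi mu S.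

Lemma setD_sub_exchange zeta S1 S2 : S1 \subset S2 -> zeta :\: S2 \subset exchange zeta S1.
Proof. by move=> S12; rewrite subsetU // setDS. Qed.

Lemma exchange_nonneg zeta S g : g \in exchange zeta S -> ~~ (pi g < 0) -> g \in zeta :\: S.
Proof. by rewrite in_setU => /orP[// | /mustarP[->]]. Qed.

Hypothesis hmu : edge_partition s t pi mu.

Lemma src_mu g e : pi g < 0 -> e \in mu g -> s e = s g.
Proof. by move=> ng; case: hmu => _ _ /(_ g ng)[_ src _ _]; apply: src. Qed.

Lemma mu_inj g1 g2 e : pi g1 < 0 -> pi g2 < 0 -> e \in mu g1 -> e \in mu g2 -> g1 = g2.
Proof.
move=> n1 n2 e1 e2; apply/eqP/negPn/negP => ne; case: hmu => _ _ /(_ g1 n1)[_ _ _ disj].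
by have := disjointFr (disj g2 n2 ne) e1; rewrite e2.
Qed.

Variable zeta : {set E}.

Lemma exchange_functional S : S \subset zeta :&: im_mu pi mu ->
  out_functional s zeta -> out_functional s (exchange zeta S).
Proof.
move=> Sz fz; have Szeta e : e \in S -> e \in zeta by move=> /(subsetP Sz)/setIP[].
move=> f g; rewrite !in_setU !in_setD.
case/orP=> [/andP[fS fz'] | /mustarP[nf [ef efS efmu]]];
case/orP=> [/andP[gS gz'] | /mustarP[ng [eg egS egmu]]] => sfg.
- exact: fz.
- by rewrite (fz _ _ fz' (Szeta _ egS) (etrans sfg (esym (src_mu ng egmu)))) egS in fS.
- by rewrite (fz _ _ gz' (Szeta _ efS) (etrans (esym sfg) (esym (src_mu nf efmu)))) efS in gS.
- have efg : ef = eg by apply: fz; rewrite ?Szeta // (src_mu nf efmu) (src_mu ng egmu).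
  by apply: (mu_inj nf ng efmu); rewrite efg.
Qed.

Lemma is_sink_exchange S : S \subset zeta :&: im_mu pi mu ->
  is_sink s (exchange zeta S) =1 is_sink s zeta.
Proof.
move=> Sz x; apply/forall_inP/forall_inP => sx e.
  have [eS ez|eS ez] := boolP (e \in S).
    have /setIP[_ /im_muP[g ng emu]] := subsetP Sz e eS.
    rewrite (src_mu ng emu); apply: sx; rewrite in_setU; apply/orP; right; apply/mustarP.
    by split=> //; exists e.
  by apply: sx; rewrite !inE eS ez.
rewrite in_setU in_setD => /orP[/andP[_ ez] | /mustarP[ng [e' e'S e'mu]]]; first exact: sx.
rewrite -(src_mu ng e'mu); apply: sx.
by have /setIP[] := subsetP Sz e' e'S.
Qed.

Lemma dcycle_exchangeU E1 E2 p : dcycle s t p ->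
  all (mem (exchange zeta (E1 :|: E2))) p ->
  all (mem (exchange zeta E1)) p || all (mem (exchange zeta E2)) p.
Proof.
move=> dp pX; have up : uniq p by case/and3P: dp => _ /map_uniq.
have [_ /(_ p dp) neg1 _] := hmu.
have [/hasP[f fp nf] | /hasPn pos] := boolP (has (fun e => pi e < 0) p); last first.
  apply/orP; left; apply/allP => g gp.
  apply: subsetP (setD_sub_exchange _ (subsetUl E1 E2)) _ _.
  exact: exchange_nonneg (allP pX g gp) (pos g gp).
have allX (X : {set E}) : X \subset E1 :|: E2 ->
    f \in exchange zeta X -> all (mem (exchange zeta X)) p.
  move=> XE fX; apply/allP => g gp; have [-> // | gf] := eqVneq g f.
  apply: subsetP (setD_sub_exchange _ XE) _ _; apply: exchange_nonneg (allP pX g gp) _.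
  by apply: contra gf => ng; rewrite (count_le1_eq up neg1 gp fp ng nf).
have := allP pX f fp; rewrite /= /exchange mustarU !in_setU => /or3P[fD | f1 | f2].
- apply/orP; left; apply: allX (subsetUl _ _) _.
  exact: subsetP (setD_sub_exchange zeta (subsetUl E1 E2)) f fD.
- by apply/orP; left; apply: allX (subsetUl _ _) _; rewrite /exchange in_setU f1 orbT.
- by apply/orP; right; apply: allX (subsetUr _ _) _; rewrite /exchange in_setU f2 orbT.
Qed.

Lemma exchangeU_reaches_sinks E1 E2 :
  acyclic s t (exchange zeta E1) -> acyclic s t (exchange zeta E2) ->
  reaches_sinks s t (exchange zeta (E1 :|: E2)).
Proof.
move=> ac1 ac2; apply: no_dcycle_reaches_sinks => p dp; apply/negP => pX.
by case/orP: (dcycle_exchangeU dp pX); apply/negP; apply: acyclic_dcycle.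
Qed.

End EdgePartition.

Unset Implicit Arguments.

Theorem lemma3p3 (R : porderZmodType) (m : nat) (E : finType)
    (s t : E -> 'I_m.+1) (pi : E -> R) (mu : E -> {set E})
    (no_loops : forall e, s e != t e)
    (hmu : edge_partition s t pi mu)
    (B : {set 'I_m.+1}) (zeta : {set E})
    (hzeta : in_Theta s t B zeta) :
  forall E1 E2 : {set E},
    in_Ezeta s t pi mu B zeta E1 ->
    in_Ezeta s t pi mu B zeta E2 ->
    in_Ezeta s t pi mu B zeta (E1 :|: E2).
Proof.
move=> E1 E2 [E1z [ac1 _ _]] [E2z [ac2 _ _]].
have Sz : E1 :|: E2 \subset zeta :&: im_mu pi mu by rewrite subUset E1z E2z.
split=> //; apply: (Theta_of_sinks hzeta).
- exact: (exchange_functional hmu Sz (Theta_functional hzeta)).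
- exact: (exchangeU_reaches_sinks hmu ac1 ac2).
- exact: (is_sink_exchange hmu Sz).
Qed.
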